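(* Let $\mathbb{E}$ be a countable subset of $\mathbb{R}$ with $0\in\mathbb{E}$, and let $\mathcal{V}$ be a closed $\mathbb{E}$-vine over a complete metric space $(X,d)$. Assume that for every $n\ge0$ we have $\mathcal{V}_{(n)}=\overline{\pi_n[\mathcal{V}_{(n+1)}]}$. Then either $\mathcal{V}=\emptyset$ or $\mathcal{V}$ is not well founded.
   Context: For finite $G\subset\mathbb{N}$, $[\mathbb{E},G]=\{f:\mathbb{N}\to\mathbb{E}:\mathrm{supp}(f)\subset G\}$ (so $[\mathbb{E},\emptyset]=\{0\}$). An $\mathbb{E}$-bunch over a set $X$ is an element $\chi=(x_f)_{f\in[\mathbb{E},G]}\in X^{[\mathbb{E},G]}$ for some finite $G\subset\mathbb{N}$. For $\chi=(x_f)_{f\in[\mathbb{E},F]}$ and $\psi=(y_f)_{f\in[\mathbb{E},G]}$ write $\chi\preceq\psi$ if $F$ is an initial segment of $G$ and $y_f=x_f$ for all $f\in[\mathbb{E},F]$. An $\mathbb{E}$-vine over $X$ is a set $\mathcal{V}$ of $\mathbb{E}$-bunches over $X$ such that $\chi\in\mathcal{V}$ and $\psi\preceq\chi$ imply $\psi\in\mathcal{V}$. It is well founded if $(\mathcal{V},\preceq)$ contains no infinite totally ordered subset. For $n\ge0$, $\mathcal{V}_{(n)}=\{(x_f)_{f\in[\mathbb{E},G]}\in\mathcal{V}:|G|=n\}$, a subset of the disjoint union $\bigcup_{G\in[\mathbb{N}]^n}X^{[\mathbb{E},G]}$, each $X^{[\mathbb{E},G]}$ carrying the product topology. $\mathcal{V}$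 is closed if $\mathcal{V}\cap X^{[\mathbb{E},G]}$ is closed in $X^{[\mathbb{E},G]}$ for every finite $G$. For $G\in[\mathbb{N}]^{n+1}$ put $G'=G\setminus\{\max G\}$ and define $\pi_n:\mathcal{V}_{(n+1)}\to\mathcal{V}_{(n)}$ by $\pi_n((x_f)_{f\in[\mathbb{E},G]})=(x_f)_{f\in[\mathbb{E},G']}$. The closure in the hypothesis is taken in $\bigcup_{G\in[\mathbb{N}]^n}X^{[\mathbb{E},G]}$. *)

From HB Require Import structures.
From mathcomp Require Import all_boot all_order all_algebra finmap.
From mathcomp Require Import all_classical all_reals all_analysis.
Set Implicit Arguments. Unset Strict Implicit. Unset Printing Implicit Defensive.
Import Order.TTheory GRing.Theory Num.Theory.
Local Open Scope classical_set_scope.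
Local Open Scope ring_scope.

Section Vines.
Variables (R : realType) (E : set R) (X : Type).

Definition in_EG (G : {fset nat}) (f : nat -> R) : Prop :=
  (forall n, E (f n)) /\ (forall n, f n != 0 -> n \in G).

Definition EG (G : {fset nat}) : Type := {f : nat -> R | in_EG G f}.

Definition bunch : Type := {G : {fset nat} & EG G -> X}.

Definition bdom (chi : bunch) : {fset nat} := projT1 chi.

Definition initseg (F G : {fset nat}) : Prop :=
  (F `<=` G)%fset /\ (forall a b, a \in F -> b \in G -> (b < a)%N -> b \in F).

Definition bprec (chi psi : bunch) : Prop :=
  initseg (projT1 chi) (projT1 psi) /\
  forall (f : nat -> R) (hF : in_EG (projT1 chi) f) (hG : in_EG (projT1 psi) f),
    projT2 psi (exist _ f hG) = projT2 chi (exist _ f hF).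

Definition is_vine (V : set bunch) : Prop :=
  forall chi psi, V chi -> bprec psi chi -> V psi.

Definition well_founded_vine (V : set bunch) : Prop :=
  ~ exists S : set bunch, S `<=` V /\ infinite_set S /\
      (forall a b, S a -> S b -> bprec a b \/ bprec b a).

Definition slice (V : set bunch) (G : {fset nat}) : set (EG G -> X) :=
  [set x | V (existT _ G x)].

Definition fmax (G : {fset nat}) : nat := \max_(i <- G) i.
Definition fdropmax (G : {fset nat}) : {fset nat} := (G `\ fmax G)%fset.

(* the slice at G (with #|G| = n) of pi_n[V_(n+1)] *)
Definition proj_slice (V : set bunch) (n : nat) (G : {fset nat}) : set (EG G -> X) :=
  [set y | exists (H : {fset nat}) (x : EG H -> X),
      V (existT _ H x) /\ #|` H| = n.+1 /\ fdropmax H = G /\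
      forall (f : nat -> R) (hG : in_EG G f) (hH : in_EG H f),
        y (exist _ f hG) = x (exist _ f hH)].
End Vines.
Arguments slice {R E X} V G _.
Arguments proj_slice {R E X} V n G _.

Definition closed_vine (R : realType) (E : set R) (X : topologicalType)
  (V : set (bunch E X)) : Prop :=
  forall G : {fset nat}, closed (slice V G : set {ptws EG E G -> X}).

(* Since E is countable, the finitely supported E-valued sequences can be
   enumerated as phi 0, phi 1, ...  Starting from any bunch b_0 in V, the
   density hypothesis lets us choose b_(k+1) in V on one more index, with
   G_k = G_(k+1) minus its maximum, whose values at the first k enumerated
   points of [E,G_k] are 2^-k-close to those of b_k.  For every f in [E,G_n]
   the values of b_k at f (k >= n) then form a Cauchy sequence; their limits
   define bunches c_n on G_n.  Each c_n is a pointwise limit of restrictions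
   of the b_k, which lie in V because V is a vine, so c_n is in V because V is
   closed.  The c_n form a strictly increasing chain, hence V is not well
   founded. *)
From mathcomp Require Import all_boot all_order all_algebra finmap.
From mathcomp Require Import all_classical all_reals all_analysis.
From mathcomp Require Import lra.
Import Order.TTheory GRing.Theory Num.Theory.
Local Open Scope classical_set_scope.
Local Open Scope ring_scope.

Lemma ptws_cvgP (I : Type) (X : topologicalType) (F : set_system {ptws I -> X})
  {FF : Filter F} (f : {ptws I -> X}) :
  F --> f <-> forall i, (fun g : {ptws I -> X} => g i) @ F --> f i.
Proof.
split=> [/(@cvg_sup _ _ _ F f FF) Fcoord i | Fcoord].
  apply: cvg_trans (cvg_app (fun g : I -> X => g i) (Fcoord i)) _.
  exact: initial_continuous.
pose coord_top i :=
  Topological.class (initial_topology (fun g : I -> X => g i)).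
apply/(@cvg_sup _ _ coord_top F f FF).
move=> i A /= [_ [[B Bopen <-] Bfi sBA]].
have : nbhs (f i) B by rewrite nbhsE; exists B.
by move=> /Fcoord; rewrite !nbhs_filterE => /(filterS sBA).
Qed.

Lemma ptws_near_ball (R : numDomainType) (I : Type) (X : pseudoMetricType R)
  (z : {ptws I -> X}) (i : I) (eps : R) :
  0 < eps -> \forall y \near z, ball (z i) eps (y i).
Proof.
move=> eps0; have /ptws_cvgP zcoord : nbhs z --> z by exact: cvg_id.
exact: zcoord i _ (nbhsx_ballx _ _ eps0).
Qed.

Definition pow2inv (R : realType) (k : nat) : R := (2 ^+ k)^-1.

Lemma pow2inv_gt0 (R : realType) (k : nat) : 0 < pow2inv R k.
Proof. by rewrite invr_gt0 exprn_gt0. Qed.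

Lemma pow2invS (R : realType) (k : nat) : pow2inv R k.+1 = pow2inv R k / 2.
Proof. by rewrite /pow2inv exprS invfM mulrC. Qed.

Section GeometricCauchy.
Variables (R : realType) (X : completePseudoMetricType R).
Variables (u : nat -> X) (N : nat).
Hypothesis u_step : forall k, (N <= k)%N -> ball (u k) (pow2inv R k) (u k.+1).

(* Triangle inequality along the sequence: the radius below is the sum
   2^-m + ... + 2^-(m+j). *)
Lemma ball_geometric_chain m j : (N <= m)%N ->
  ball (u m) (2 * (pow2inv R m - pow2inv R (m + j.+1))) (u (m + j.+1)).
Proof.
move=> Nm; elim: j => [|j IH].
  rewrite addn1; apply: (le_ball _ (u_step _ Nm)); rewrite pow2invS; lra.
have Nmj : (N <= m + j.+1)%N by apply: leq_trans Nm (leq_addr _ _).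
rewrite addnS pow2invS.
apply: (le_ball _ (ball_triangle IH (u_step _ Nmj))); lra.
Qed.

Lemma ball_geometric_tail m k : (N <= m)%N -> (m <= k)%N ->
  ball (u m) (2 * pow2inv R m) (u k).
Proof.
move=> Nm; rewrite leq_eqVlt => /orP [/eqP <-|mk].
  by apply: ballxx; rewrite mulr_gt0 ?pow2inv_gt0.
rewrite -(subnKC mk) addSnnS; apply: (le_ball _ (ball_geometric_chain _ _ Nm)).
have := pow2inv_gt0 R (m + (k - m.+1).+1); lra.
Qed.

Lemma cvgn_geometric : cvgn u.
Proof.
apply: cauchy_cvg; apply: cauchy_exP => _ /posnumP[e].
have [M _ smallM] := near_infty_natSinv_expn_lt (e%:num / 2)%:pos.
pose m := maxn N M.
exists (u m); exists m => // k /= mk.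
apply: (le_ball _ (ball_geometric_tail _ _ (leq_maxl _ _) mk)); apply: ltW.
have := smallM m (leq_maxr _ _); rewrite /pow2inv mul1r /= /m; lra.
Qed.

End GeometricCauchy.

Lemma fmax_ge {G : {fset nat}} {n : nat} : n \in G -> (n <= fmax G)%N.
Proof. by move=> nG; apply: (@leq_bigmax_seq _ (enum_fset G) xpredT id n). Qed.

Lemma initseg_refl (G : {fset nat}) : initseg G G.
Proof. by split; [exact: fsubset_refl | move=> a b _ ->]. Qed.

Lemma initseg_trans (F G H : {fset nat}) :
  initseg F G -> initseg G H -> initseg F H.
Proof.
move=> [FG FGinit] [GH GHinit]; split; first exact: fsubset_trans FG GH.
move=> a b aF bH ba.
exact: (FGinit a b aF (GHinit a b (fsubsetP FG _ aF) bH ba) ba).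
Qed.

Lemma initseg_drop (H : {fset nat}) : initseg (fdropmax H) H.
Proof.
split; first exact: fsubsetDl.
move=> a b; rewrite /fdropmax !in_fsetD1 => /andP [_ aH] bH ba.
rewrite bH andbT; apply/eqP => bmax.
by move: (fmax_ge aH); rewrite -bmax leqNgt ba.
Qed.

Section FinsuppEnumeration.
Context {R : realType} {E : set R}.

Lemma in_EG_sub {G H : {fset nat}} {f : nat -> R} :
  in_EG E G f -> (G `<=` H)%fset -> in_EG E H f.
Proof. by move=> [fE fG] GH; split => // n /fG; apply: (fsubsetP GH). Qed.

(* E countable: the union of all [E,G] is enumerated by the sequences
   k |-> (g s_0, ..., g s_(l-1), 0, 0, ...), where s is the list of naturals
   coded by k and g : nat -> R is a map whose range contains E. *)
Lemma finsupp_enum : countable E ->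
  exists phi : nat -> nat -> R,
    forall G f, in_EG E G f -> exists k, phi k = f.
Proof.
move=> /ocard_geP [h].
pose g n := odflt 0 (h n).
pose phi k n := let s := odflt [::] (@choice.unpickle (seq nat) k) in
  if (n < size s)%N then g (nth 0%N s n) else 0.
exists phi => G f [fE fG].
have [c gc] : {c : nat -> nat & forall n, g (c n) = f n}.
  apply: (@choice _ _ (fun n m => g m = f n)) => n.
  have [m _ hm] := 'surj_h (ex_intro2 _ _ (f n) (fE n) erefl).
  by exists m; rewrite /g hm.
exists (@choice.pickle (seq nat) (mkseq c (fmax G).+1)); apply: funext => n.
rewrite /phi choice.pickleK /odflt /oapp size_mkseq; case: ltnP => [nG|Gn].
  by rewrite nth_mkseq.
apply/esym/eqP; apply: contraTT Gn => /fG /fmax_ge.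
by rewrite -ltnNge ltnS.
Qed.

End FinsuppEnumeration.

Section Evaluation.
Context {R : realType} {E : set R} {X : Type} (x0 : X).

(* Total evaluation of a bunch at any sequence, with default value x0
   outside its index set. *)
Definition ev (b : bunch E X) (f : nat -> R) : X :=
  match pselect (in_EG E (projT1 b) f) with
  | left h => projT2 b (exist _ f h)
  | right _ => x0
  end.

Lemma evE (b : bunch E X) {f} (h : in_EG E (projT1 b) f) :
  ev b f = projT2 b (exist _ f h).
Proof.
by rewrite /ev; case: pselect => [h'|//]; rewrite (Prop_irrelevance h h').
Qed.

End Evaluation.

Section Approximation.
Context {R : realType} {E : set R} {X : completePseudoMetricType R} (x0 : X).
Variables (phi : nat -> nat -> R) (V : set (bunch E X)).
Hypothesis V_dense : forall (n : nat) (G : {fset nat}), #|` G| = n ->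
  slice V G = closure (proj_slice V n G : set {ptws EG E G -> X}).

Definition close_extension (k : nat) (eps : R) (b b' : bunch E X) : Prop :=
  [/\ V b', fdropmax (projT1 b') = projT1 b,
      #|` projT1 b'| = (#|` projT1 b|).+1 &
      forall i, (i <= k)%N -> in_EG E (projT1 b) (phi i) ->
        ball (ev x0 b (phi i)) eps (ev x0 b' (phi i))].

(* Density of pi_n[V_(n+1)] in V_(n): every bunch of V has close extensions. *)
Lemma close_extension_exists (b : bunch E X) (k : nat) (eps : R) :
  0 < eps -> V b -> exists b', close_extension k eps b b'.
Proof.
case: b => G z /= eps0 Vz.
have zcl : closure (proj_slice V #|` G| G : set {ptws EG E G -> X}) z.
  by rewrite -(V_dense _ _ (erefl #|` G|)).
pose close_at (i : 'I_k.+1) (y : {ptws EG E G -> X}) := in_EG E G (phi i) ->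
  ball (ev x0 (existT _ G z) (phi i)) eps (ev x0 (existT _ G y) (phi i)).
have : \forall y \near (z : {ptws EG E G -> X}), forall i, close_at i y.
  apply: (@filter_forall _ _ close_at (nbhs (z : {ptws EG E G -> X})) _) => i.
  case: (pselect (in_EG E G (phi i))) => [h|nh]; last by apply: nearW => y /nh.
  near=> y => _; rewrite (evE x0 (existT _ G z) h) (evE x0 (existT _ G y) h) /=.
  by near: y; apply: ptws_near_ball.
move=> /zcl [y [[H [x [VHx [cardH [dropH agree]]]]] y_near]].
exists (existT _ H x); split => //= i ik h.
have hH : in_EG E H (phi i).
  by apply: (in_EG_sub h); rewrite -dropH fsubsetDl.
have := y_near (Ordinal (ik : (i < k.+1)%N)) h.
rewrite (evE x0 (existT _ G z) h) (evE x0 (existT _ G y) h).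
by rewrite (evE x0 (existT _ H x) hH) /= agree.
Unshelve. all: by end_near. Qed.

Lemma close_extension_fun : exists stp : nat -> bunch E X -> bunch E X,
  forall k b, V b -> close_extension k (pow2inv R k) b (stp k b).
Proof.
have [stp stpP] : {stp : nat * bunch E X -> bunch E X &
    forall kb, V kb.2 -> close_extension kb.1 (pow2inv R kb.1) kb.2 (stp kb)}.
  apply: (@choice _ _ (fun kb b' =>
    V kb.2 -> close_extension kb.1 (pow2inv R kb.1) kb.2 b')) => -[k b] /=.
  have [Vb|nVb] := pselect (V b); last by exists b.
  have [b' ?] := close_extension_exists b k _ (pow2inv_gt0 R k) Vb.
  by exists b'.
by exists (fun k b => stp (k, b)) => k b /(stpP (k, b)).
Qed.

End Approximation.

Lemma chain_not_well_founded {R : realType} {E : set R} {X : Type}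
  {V : set (bunch E X)} {c : nat -> bunch E X} :
  injective c -> (forall n, V (c n)) ->
  (forall a b, (a <= b)%N -> bprec (c a) (c b)) -> ~ well_founded_vine V.
Proof.
move=> c_inj Vc c_prec; apply; exists (range c); split; [|split].
- by move=> _ [n _ <-].
- move=> /(finite_preimage (in2W c_inj)).
  have -> : c @^-1` range c = setT by apply/seteqP; split => // n _; exists n.
  exact: infinite_nat.
- move=> _ _ [a _ <-] [b _ <-].
  by case: (leqP a b) => [ab|/ltnW ba]; [left | right]; apply: c_prec.
Qed.

Section LimitChain.
Context {R : realType} {E : set R} {X : completePseudoMetricType R} (x0 : X).
Context {phi : nat -> nat -> R} {V : set (bunch E X)}.
Hypothesis phi_onto : forall G f, in_EG E G f -> exists k, phi k = f.
Hypothesis V_vine : is_vine V.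
Hypothesis V_closed : closed_vine V.
Context {stp : nat -> bunch E X -> bunch E X}.
Hypothesis stpP : forall k b, V b ->
  close_extension x0 phi V k (pow2inv R k) b (stp k b).
Context {b0 : bunch E X}.
Hypothesis Vb0 : V b0.

Fixpoint approx (k : nat) : bunch E X :=
  if k is k'.+1 then stp k' (approx k') else b0.

Definition dom (k : nat) : {fset nat} := projT1 (approx k).

Lemma approx_in_V k : V (approx k).
Proof. by elim: k => [|k IH] //=; case: (stpP k _ IH). Qed.

Lemma approx_step k :
  close_extension x0 phi V k (pow2inv R k) (approx k) (approx k.+1).
Proof. exact: stpP _ _ (approx_in_V k). Qed.

Lemma dom_card k : #|` dom k| = (#|` dom 0| + k)%N.
Proof.
elim: k => [|k IH]; first by rewrite addn0.
case: (approx_step k) => _ _ + _; rewrite /dom => ->.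
by rewrite -/(dom k) IH addnS.
Qed.

Lemma dom_initseg {n m : nat} : (n <= m)%N -> initseg (dom n) (dom m).
Proof.
elim: m => [|m IH]; first by rewrite leqn0 => /eqP ->; exact: initseg_refl.
rewrite leq_eqVlt => /orP [/eqP ->|nm]; first exact: initseg_refl.
apply: initseg_trans (IH nm) _; case: (approx_step m) => _ drop_m _ _.
by rewrite /dom -drop_m; apply: initseg_drop.
Qed.

(* Every f in [E,G_n] is some phi i, so from k >= max(n,i) on the values of
   the b_k at f move by less than 2^-k at each step. *)
Lemma approx_cvg n f : in_EG E (dom n) f -> cvgn (fun k => ev x0 (approx k) f).
Proof.
move=> fn; have [i phi_i] := phi_onto _ _ fn; rewrite -phi_i in fn *.
apply: (@cvgn_geometric _ _ _ (maxn n i)) => k /[dup] nik.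
rewrite geq_max => /andP [nk ik]; case: (approx_step k) => _ _ _; apply => //.
by apply: (in_EG_sub fn); case: (dom_initseg nk).
Qed.

Definition limit_bunch (n : nat) : bunch E X :=
  existT _ (dom n)
    (fun y : EG E (dom n) => lim (ev x0 (approx k) (sval y) @[k --> \oo])).

(* For k >= n the restrictions of b_k to [E,G_n] are in V (V is a vine) and
   converge pointwise to c_n, so c_n is in the closed slice of V at G_n. *)
Lemma limit_bunch_in_V n : V (limit_bunch n).
Proof.
pose u k : {ptws EG E (dom n) -> X} := fun y => ev x0 (approx k) (sval y).
apply: (@closed_cvg _ _ \oo _ u _ (V_closed (dom n))).
  exists n => // k /= nk; apply: (V_vine _ _ (approx_in_V k)).
  split; first exact: dom_initseg.
  by move=> f hF hG /=; rewrite /u /= (evE x0 (approx k) hG).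
by apply/ptws_cvgP => y; apply: approx_cvg (svalP y).
Qed.

Lemma limit_bunch_prec a b :
  (a <= b)%N -> bprec (limit_bunch a) (limit_bunch b).
Proof. by move=> ab; split; [exact: dom_initseg | move=> f hF hG /=]. Qed.

Lemma limit_bunch_inj : injective limit_bunch.
Proof.
move=> a b /(congr1 (fun c => #|` projT1 c|)) /=.
by rewrite (dom_card a) (dom_card b) => /eqP; rewrite eqn_add2l => /eqP.
Qed.

Lemma limit_chain_not_well_founded : ~ well_founded_vine V.
Proof.
exact: (chain_not_well_founded
  limit_bunch_inj limit_bunch_in_V limit_bunch_prec).
Qed.

End LimitChain.

Theorem lemma3p1 (R : realType) (E : set R) (X : completePseudoMetricType R)
  (V : set (bunch E X)) :
  countable E -> E 0 -> hausdorff_space X ->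
  is_vine V -> closed_vine V ->
  (forall (n : nat) (G : {fset nat}), #|` G| = n ->
     slice V G = closure (proj_slice V n G : set {ptws EG E G -> X})) ->
  V = set0 \/ ~ well_founded_vine V.
Proof.
move=> cE E0 _ V_vine V_closed V_dense.
have [->|/set0P [b0 Vb0]] := eqVneq V set0; [by left | right].
have zero_in : in_EG E (projT1 b0) (fun _ => 0) by split => // n; rewrite eqxx.
pose x0 := projT2 b0 (exist _ _ zero_in). (* a point of X, as 0 is in E *)
have [phi phi_onto] := finsupp_enum cE.
have [stp stpP] := close_extension_fun x0 phi V V_dense.
exact: (limit_chain_not_well_founded x0 phi_onto V_vine V_closed stpP Vb0).
Qed.
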